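(* Let $G$ be a finite group. For all subsets $X,Y\subseteq G$ with $X^G=X$ and $Y^G=Y$ we have $[X,{}_MY]=[[X,G],{}_MY]$.
   Context: $[x,y]=x^{-1}y^{-1}xy$, $x^y=y^{-1}xy$, $X^G=\{x^g:x\in X,g\in G\}$. For subsets $A,B\subseteq G$, $[A,B]$ is the subgroup generated by $\{[a,b]:a\in A,b\in B\}$, and $[A,{}_kB]=[\cdots[[A,B],B]\cdots,B]$ with $k$ copies of $B$. $M=M(G)\in\mathbb{N}$ is fixed such that $[A,{}_MB]=[A,{}_iB]$ for all $i\ge M$ and all $A,B\subseteq G$ with $A^G=A$, $B^G=B$. *)

From mathcomp Require Import all_boot all_fingroup.
Set Implicit Arguments. Unset Strict Implicit. Unset Printing Implicit Defensive.
Local Open Scope group_scope.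

(* [A, _k B] : iterated commutator subgroup [...[[A,B],B]...,B] with k copies
   of B; [A, _0 B] = A.  [~: C, B] is the subgroup generated by all [c,b]. *)
Definition itcomm (gT : finGroupType) (A B : {set gT}) (k : nat) : {set gT} :=
  iter k (fun C => [~: C, B]) A.

Definition normal_subset (gT : finGroupType) (G : {group gT}) (A : {set gT}) :=
  (A \subset G) && (class_support A G == A).

Definition stab_index (gT : finGroupType) (G : {group gT}) (M : nat) : Prop :=
  forall A B : {set gT}, normal_subset G A -> normal_subset G B ->
    forall i, M <= i -> itcomm A B M = itcomm A B i.

(* For normal subsets X, Y of G, the set [X, G] lies in <<X>> and <<X>>
   normalises [X, Y], so [[X, G], Y] <= [<<X>>, Y] = [X, Y]; conversely
   [X, Y] <= [X, G] since Y <= G.  One more commutation with Y thus sandwiches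
   [X, _(M+1) Y] and [[X, G], _(M+1) Y] between each other, and both series
   have already stabilised at step M because [X, G] is again a normal subset. *)

From mathcomp Require Import all_boot all_fingroup commutator.
Local Open Scope group_scope.

Lemma itcommSr (gT : finGroupType) (A B : {set gT}) k :
  itcomm A B k.+1 = itcomm [~: A, B] B k.
Proof. by rewrite /itcomm iterSr. Qed.

Lemma itcommSg (gT : finGroupType) (A A' B : {set gT}) k :
  A \subset A' -> itcomm A B k \subset itcomm A' B k.
Proof. by move=> sAA'; elim: k => [|k IHk] //=; apply: commSg. Qed.

Lemma commg_genl (gT : finGroupType) (A B : {set gT}) :
    A \subset 'N([~: A, B]) -> B \subset 'N([~: A, B]) ->
  [~: <<A>>, B] = [~: A, B].
Proof.
move=> nRA nRB; apply/eqP; rewrite eqEsubset [X in _ && X]commSg ?subset_gen //.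
rewrite andbT -quotient_cents2 ?gen_subG // quotient_gen // gen_subG.
by rewrite quotient_cents2.
Qed.

Section NormalSubsets.

Context {gT : finGroupType} {G : {group gT}}.

Lemma normal_subsetE (A : {set gT}) :
  normal_subset G A = (A \subset G) && (G \subset 'N(A)).
Proof.
rewrite /normal_subset; case: (A \subset G) => //=; apply/eqP/idP.
  by move <-; apply: class_support_norm.
move=> nAG; apply/eqP; rewrite eqEsubset sub_class_support andbT.
by rewrite class_supportEr; apply/bigcupsP=> g Gg; rewrite (normsP nAG).
Qed.

Lemma normal_subsetG : normal_subset G G.
Proof. by rewrite normal_subsetE subxx normG. Qed.

Lemma normal_subsetR (A B : {set gT}) :
  normal_subset G A -> normal_subset G B -> normal_subset G [~: A, B].
Proof.
rewrite !normal_subsetE => /andP[sAG nAG] /andP[sBG nBG].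
by rewrite normsR // (subset_trans (commg_sub A B)) // join_subG sAG.
Qed.

Lemma normal_subset_commRl (X Y : {set gT}) :
    normal_subset G X -> normal_subset G Y ->
  [~: [~: X, G], Y] \subset [~: X, Y].
Proof.
rewrite !normal_subsetE => /andP[sXG nXG] /andP[sYG nYG].
have nRG : G \subset 'N([~: X, Y]) by apply: normsR.
have sRXG : [~: X, G] \subset <<X>>.
  rewrite (subset_trans (commSg G (subset_gen X))) // commg_subl.
  exact: norms_gen.
by rewrite -(@commg_genl _ X Y) ?commSg ?(subset_trans _ nRG).
Qed.

End NormalSubsets.

Theorem lemma2p2 (gT : finGroupType) (G : {group gT}) (M : nat)
  (hM : stab_index G M) (X Y : {set gT}) :
  normal_subset G X -> normal_subset G Y ->
  itcomm X Y M = itcomm [~: X, G] Y M.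
Proof.
move=> nsX nsY.
have nsXG : normal_subset G [~: X, G] by rewrite normal_subsetR ?normal_subsetG.
have stabS A : normal_subset G A -> itcomm A Y M = itcomm [~: A, Y] Y M.
  by move=> nsA; rewrite (hM A Y nsA nsY M.+1 (leqnSn M)) itcommSr.
have sYG : Y \subset G by case/andP: nsY.
apply/eqP; rewrite eqEsubset (stabS X nsX) itcommSg ?commgS //.
by rewrite (stabS _ nsXG) itcommSg ?normal_subset_commRl.
Qed.
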